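(* Let $\lambda$ be a nonzero real number. For every integer $n\ge 0$ and every $x$ in a neighborhood of $0$, $$\mathrm{bel}_{n,\lambda}(x)=\mathrm{Bel}_{n,\lambda}\!\left(\frac{x}{1+\lambda x}\right).$$
   Context: For nonzero $\lambda\in\mathbb{R}$, $e_{\lambda}(t)=(1+\lambda t)^{1/\lambda}$. The degenerate Bell polynomials $\mathrm{Bel}_{n,\lambda}(x)$ are defined by $e_{\lambda}\big(x(e^{t}-1)\big)=\sum_{n=0}^{\infty}\mathrm{Bel}_{n,\lambda}(x)\frac{t^{n}}{n!}$. The degenerate Bell polynomials of the second kind $\mathrm{bel}_{n,\lambda}(x)$ are defined by $e_{\lambda}(xe^{t})\cdot e_{\lambda}(x)^{-1}=\sum_{n=0}^{\infty}\mathrm{bel}_{n,\lambda}(x)\frac{t^{n}}{n!}$. *)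

From Stdlib Require Import Reals.
From Coquelicot Require Import Coquelicot.
Open Scope R_scope.

(* Degenerate exponential e_lambda(t) = (1 + lambda t)^(1/lambda)
   (real power; meaningful where 1 + lambda t > 0, which holds near the
   points where it is used below). *)
Definition e_lam (lam t : R) : R := Rpower (1 + lam * t) (1 / lam).

(* Degenerate Bell polynomials: n-th Taylor coefficient (times n!) of
   e_lambda(x (e^t - 1)) at t = 0, i.e. the n-th derivative in t at 0. *)
Definition Bel (n : nat) (lam x : R) : R :=
  Derive_n (fun t => e_lam lam (x * (exp t - 1))) n 0.

Definition bel (n : nat) (lam x : R) : R :=
  Derive_n (fun t => e_lam lam (x * exp t) * / e_lam lam x) n 0.

From Stdlib Require Import Reals Lra.
From Coquelicot Require Import Coquelicot.
Open Scope R_scope.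

(* With y = x / (1 + lam x) one has 1 + lam x e^t = (1 + lam x)(1 + lam y (e^t - 1)),
   so e_lam(x e^t) / e_lam(x) = e_lam(y (e^t - 1)) wherever both factors are positive,
   in particular for t near 0 once |lam x| < 1.  Functions that agree near 0 have the
   same derivatives at 0. *)

Lemma e_lam_pos (lam t : R) : 0 < e_lam lam t.
Proof. exact (exp_pos _). Qed.

Lemma e_lam_add_mul (lam s u : R) :
  0 < 1 + lam * s -> 0 < 1 + lam * u ->
  e_lam lam (s + u + lam * s * u) = e_lam lam s * e_lam lam u.
Proof.
  intros Hs Hu. unfold e_lam.
  rewrite Rpower_mult_distr by assumption.
  f_equal; ring.
Qed.

Lemma mul_exp_decomp (lam x t : R) :
  1 + lam * x <> 0 ->
  x * exp t = x + x / (1 + lam * x) * (exp t - 1)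
              + lam * x * (x / (1 + lam * x) * (exp t - 1)).
Proof. intros Hx. field. exact Hx. Qed.

Lemma e_lam_mul_exp_div (lam x t : R) :
  0 < 1 + lam * x -> 0 < 1 + lam * (x * exp t) ->
  e_lam lam (x * exp t) * / e_lam lam x
  = e_lam lam (x / (1 + lam * x) * (exp t - 1)).
Proof.
  intros Hx Hxt.
  rewrite (mul_exp_decomp lam x t) by lra.
  set (y := x / (1 + lam * x) * (exp t - 1)).
  assert (Hy : 1 + lam * y = (1 + lam * (x * exp t)) / (1 + lam * x)).
  { unfold y. field. lra. }
  rewrite e_lam_add_mul; [| assumption |].
  - field. apply Rgt_not_eq, e_lam_pos.
  - rewrite Hy. apply Rdiv_lt_0_compat; assumption.
Qed.

Lemma locally_pos_continuous (f : R -> R) (t0 : R) :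
  continuous f t0 -> 0 < f t0 -> locally t0 (fun t => 0 < f t).
Proof. intros Hf Hpos. apply Hf. now apply open_gt. Qed.

Lemma e_lam_mul_exp_div_near0 (lam x : R) :
  0 < 1 + lam * x ->
  locally 0 (fun t => e_lam lam (x * exp t) * / e_lam lam x
                      = e_lam lam (x / (1 + lam * x) * (exp t - 1))).
Proof.
  intros Hx.
  assert (Hnear : locally 0 (fun t => 0 < 1 + lam * (x * exp t))).
  { apply locally_pos_continuous.
    - apply (@ex_derive_continuous R_AbsRing R_NormedModule). auto_derive. trivial.
    - now rewrite exp_0, Rmult_1_r. }
  exact (filter_imp _ _ (fun t Ht => e_lam_mul_exp_div lam x t Hx Ht) Hnear).
Qed.

Lemma one_plus_mul_pos (lam x : R) :
  Rabs x < / Rabs lam -> 0 < 1 + lam * x.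
Proof.
  intros Hx.
  destruct (Req_dec lam 0) as [-> | Hlam]; [lra |].
  assert (Hl : 0 < Rabs lam) by now apply Rabs_pos_lt.
  assert (Hlx : Rabs (lam * x) < 1).
  { rewrite Rabs_mult.
    apply (Rmult_lt_compat_l (Rabs lam)) in Hx; [| exact Hl].
    now rewrite Rinv_r in Hx by lra. }
  apply Rabs_def2 in Hlx. lra.
Qed.

Theorem theorem6 (lam : R) (hlam : lam <> 0) :
  exists eps : R, 0 < eps /\
    forall (n : nat) (x : R), Rabs x < eps ->
      bel n lam x = Bel n lam (x / (1 + lam * x)).
Proof.
  exists (/ Rabs lam). split.
  - now apply Rinv_0_lt_compat, Rabs_pos_lt.
  - intros n x Hx.
    apply Derive_n_ext_loc, e_lam_mul_exp_div_near0, one_plus_mul_pos, Hx.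
Qed.
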